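(* Let $A$ be an algebra over a field $K$ and let $T:A\to A$ be a weak multiplier of $A$ such that $\langle T(A)\rangle\cap A_0=\{0\}$. Then $T$ is $K$-linear.
   Context: An algebra over $K$ is a $K$-vector space with a bilinear, not necessarily associative multiplication. A map $T:A\to A$ (not assumed linear) is a weak multiplier if $xT(y)=T(x)y$ for all $x,y\in A$. $\mathrm{Ann}_l(A)=\{a\in A: ax=0\ \forall x\in A\}$, $\mathrm{Ann}_r(A)=\{a\in A: xa=0\ \forall x\in A\}$, and $A_0=\mathrm{Ann}_l(A)\cap\mathrm{Ann}_r(A)$. For a subset $X\subseteq A$, $\langle X\rangle$ is the linear subspace spanned by $X$. *)

From HB Require Import structures.
From mathcomp Require Import all_boot all_order all_algebra.
Set Implicit Arguments. Unset Strict Implicit. Unset Printing Implicit Defensive.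
Import GRing.Theory.
Local Open Scope ring_scope.

(* A (not necessarily associative) algebra over K: a K-vector space V
   (lmodType K) with a multiplication mul : V -> V -> V that is bilinear. *)
Definition bilinear_mul (K : fieldType) (V : lmodType K) (mul : V -> V -> V) :=
  (forall (a : K) (x y z : V), mul (a *: x + y) z = a *: mul x z + mul y z) /\
  (forall (a : K) (x y z : V), mul z (a *: x + y) = a *: mul z x + mul z y).

Definition weak_multiplier (K : fieldType) (V : lmodType K)
  (mul : V -> V -> V) (T : V -> V) :=
  forall x y : V, mul x (T y) = mul (T x) y.

Definition ann_l (K : fieldType) (V : lmodType K) (mul : V -> V -> V) (a : V) :=
  forall x : V, mul a x = 0.
Definition ann_r (K : fieldType) (V : lmodType K) (mul : V -> V -> V) (a : V) :=
  forall x : V, mul x a = 0.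
Definition A0 (K : fieldType) (V : lmodType K) (mul : V -> V -> V) (a : V) :=
  ann_l mul a /\ ann_r mul a.

Definition in_span (K : fieldType) (V : lmodType K) (X : V -> Prop) (v : V) :=
  exists (n : nat) (c : 'I_n -> K) (x : 'I_n -> V),
    (forall i, X (x i)) /\ v = \sum_(i < n) c i *: x i.

Definition image_of (V : Type) (T : V -> V) (v : V) := exists y, v = T y.

Definition K_linear (K : fieldType) (V : lmodType K) (T : V -> V) :=
  forall (a : K) (x y : V), T (a *: x + y) = a *: T x + T y.

From mathcomp Require Import all_boot all_order all_algebra.
Import GRing.Theory.
Local Open Scope ring_scope.
Set Implicit Arguments.
Unset Strict Implicit.

(* For a, x, y fix the linearity defect
     d = T (a x + y) - (a T(x) + T(y)).
   Using the weak multiplier identity T(u) z = u T(z) and bilinearity,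
     d z = (a x + y) T(z) - a x T(z) - y T(z) = 0,
   and symmetrically z d = 0, so d lies in A_0.  Being a linear combination
   of three values of T, d also lies in <T(A)>; the hypothesis
   <T(A)> ∩ A_0 = {0} then forces d = 0, which is linearity of T. *)

Section Span.
Variables (K : fieldType) (V : lmodType K) (X : V -> Prop).

Lemma in_span0 : in_span X 0.
Proof. by exists 0%N, (fun=> 0), (fun=> 0); rewrite big_ord0; split=> [[]|]. Qed.

Lemma in_span_gen (v : V) : X v -> in_span X v.
Proof.
move=> Xv; exists 1%N, (fun=> 1), (fun=> v); split=> //.
by rewrite big_ord1 scale1r.
Qed.

(* The span is closed under linear combinations a u + w: concatenate the
   two families of generators, scaling the coefficients of the first by a. *)
Lemma in_span_comb (a : K) (u w : V) :
  in_span X u -> in_span X w -> in_span X (a *: u + w).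
Proof.
move=> [m [cu [xu [Xu ->]]]] [n [cw [xw [Xw ->]]]].
pose c (i : 'I_(m + n)) := match split i with inl j => a * cu j | inr k => cw k end.
pose x (i : 'I_(m + n)) := match split i with inl j => xu j | inr k => xw k end.
have split_l (j : 'I_m) : split (lshift n j) = inl j by exact: (unsplitK (inl j)).
have split_r (k : 'I_n) : split (rshift m k) = inr k by exact: (unsplitK (inr k)).
exists (m + n)%N, c, x; split.
  by move=> i; rewrite /x; case: (split i).
rewrite big_split_ord scaler_sumr; congr (_ + _); apply: eq_bigr => i _.
  by rewrite /c /x split_l scalerA.
by rewrite /c /x split_r.
Qed.

End Span.

Section BilinearProduct.
Variables (K : fieldType) (V : lmodType K) (mul : V -> V -> V).
Hypothesis mul_bilinear : bilinear_mul mul.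

Lemma mulBl (u w z : V) : mul (u - w) z = mul u z - mul w z.
Proof.
apply: (addIr (mul w z)); rewrite subrK.
by have := mul_bilinear.1 1 (u - w) w z; rewrite !scale1r subrK.
Qed.

Lemma mulBr (u w z : V) : mul z (u - w) = mul z u - mul z w.
Proof.
apply: (addIr (mul z w)); rewrite subrK.
by have := mul_bilinear.2 1 (u - w) w z; rewrite !scale1r subrK.
Qed.

End BilinearProduct.

Section WeakMultiplierDefect.
Variables (K : fieldType) (V : lmodType K) (mul : V -> V -> V) (T : V -> V).
Hypotheses (mul_bilinear : bilinear_mul mul) (T_weak : weak_multiplier mul T).

Definition linearity_defect (a : K) (x y : V) : V :=
  T (a *: x + y) - (a *: T x + T y).

Lemma linearity_defect_in_span (a : K) (x y : V) :
  in_span (image_of T) (linearity_defect a x y).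
Proof.
have imT v : in_span (image_of T) (T v) by apply: in_span_gen; exists v.
have -> : linearity_defect a x y =
    1 *: T (a *: x + y) + ((- a) *: T x + ((- 1) *: T y + 0)).
  by rewrite /linearity_defect scale1r addr0 scaleN1r scaleNr opprD addrA.
by do 3!apply: in_span_comb => //; apply: in_span0.
Qed.

(* The defect annihilates A on both sides: moving T across the product
   turns each term into a product with T(z), where bilinearity applies. *)
Lemma linearity_defect_in_A0 (a : K) (x y : V) :
  A0 mul (linearity_defect a x y).
Proof.
split=> z; rewrite /linearity_defect.
  by rewrite (mulBl mul_bilinear) mul_bilinear.1 -!T_weak mul_bilinear.1 subrr.
by rewrite (mulBr mul_bilinear) mul_bilinear.2 !T_weak mul_bilinear.2 subrr.
Qed.

End WeakMultiplierDefect.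

Theorem proposition2p3 (K : fieldType) (V : lmodType K) (mul : V -> V -> V)
  (T : V -> V) :
  bilinear_mul mul ->
  weak_multiplier mul T ->
  (forall v : V, in_span (image_of T) v -> A0 mul v -> v = 0) ->
  K_linear T.
Proof.
move=> mul_bilinear T_weak span_A0_trivial a x y.
have defect0 : linearity_defect T a x y = 0.
  apply: span_A0_trivial; first exact: linearity_defect_in_span.
  exact: linearity_defect_in_A0.
by apply/eqP; rewrite -subr_eq0; apply/eqP.
Qed.
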